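(* Let $\alpha,\beta,\lambda,\varepsilon_1,\varepsilon_2$ be positive real numbers and consider the planar system $$s'=s\big(\varepsilon_2-\beta-\varepsilon_2 s+(\varepsilon_1-\varepsilon_2-\lambda)i\big),\qquad i'=i\big(\varepsilon_2-\varepsilon_1-\alpha+(\lambda-\varepsilon_2)s+(\varepsilon_1-\varepsilon_2)i\big)$$ on $D_1=\{(s,i): s\ge0,\ i\ge0,\ s+i\le1\}$. Let $T_0=\varepsilon_2-\beta$ and $T_1=\varepsilon_2-\varepsilon_1-\alpha$. If $T_0<0$ and $T_1<0$, then the origin is the only rest point of this system in $D_1$.
   Context: This is the special case $b=\beta_1=\gamma=0$ (with $\beta=\beta_2$) of the SIRS proportions system reduced to the $(s,i)$-plane. *)

From Stdlib Require Import Reals.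
Open Scope R_scope.

Definition sdot (alpha beta lambda eps1 eps2 s i : R) : R :=
  s * (eps2 - beta - eps2 * s + (eps1 - eps2 - lambda) * i).

Definition idot (alpha beta lambda eps1 eps2 s i : R) : R :=
  i * (eps2 - eps1 - alpha + (lambda - eps2) * s + (eps1 - eps2) * i).

Definition in_D1 (s i : R) : Prop := 0 <= s /\ 0 <= i /\ s + i <= 1.

Definition rest_point (alpha beta lambda eps1 eps2 s i : R) : Prop :=
  sdot alpha beta lambda eps1 eps2 s i = 0 /\
  idot alpha beta lambda eps1 eps2 s i = 0.

From Stdlib Require Import Reals Lra Psatz.
Open Scope R_scope.

(* Write u = 1 - s - i >= 0 for the third proportion.  Eliminating s from the
   s-rate and i from the i-rate gives
     s_rate = (eps1 - lambda) i - (beta - eps2 u),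
     i_rate = (lambda - eps1) s - (alpha + (eps1 - eps2) u),
   and T0 < 0, T1 < 0 make both subtracted terms positive on D_1.  Hence a
   zero of the s-rate forces i > 0 and lambda < eps1, while a zero of the
   i-rate forces s > 0 and eps1 < lambda: the two rates cannot vanish
   together, and each vanishes only where the other coordinate is positive. *)

Lemma unit_scale_lt (a c u : R) : 0 < a -> c < a -> 0 <= u <= 1 -> c * u < a.
Proof.
  intros Ha Hca Hu.
  destruct (Rle_or_lt c 0) as [Hc | Hc]; nra.
Qed.

Section RestPoints.

Variables alpha beta lambda eps1 eps2 : R.

Definition s_rate (s i : R) : R :=
  eps2 - beta - eps2 * s + (eps1 - eps2 - lambda) * i.

Definition i_rate (s i : R) : R :=
  eps2 - eps1 - alpha + (lambda - eps2) * s + (eps1 - eps2) * i.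

Lemma sdotE (s i : R) : sdot alpha beta lambda eps1 eps2 s i = s * s_rate s i.
Proof. reflexivity. Qed.

Lemma idotE (s i : R) : idot alpha beta lambda eps1 eps2 s i = i * i_rate s i.
Proof. reflexivity. Qed.

Lemma s_rate_eq0_in_D1 (s i : R) :
  0 < beta -> eps2 - beta < 0 -> in_D1 s i -> s_rate s i = 0 ->
  0 < i /\ lambda < eps1.
Proof.
  unfold s_rate; intros Hbeta HT0 [Hs [Hi Hsi]] Hrate.
  assert (Hu : eps2 * (1 - s - i) < beta) by (apply unit_scale_lt; lra).
  assert (Hpos : 0 < (eps1 - lambda) * i) by lra.
  clear Hrate Hu.
  destruct Hi as [Hi | <-]; [| lra].
  split; [exact Hi | nra].
Qed.

Lemma i_rate_eq0_in_D1 (s i : R) :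
  0 < alpha -> eps2 - eps1 - alpha < 0 -> in_D1 s i -> i_rate s i = 0 ->
  0 < s /\ eps1 < lambda.
Proof.
  unfold i_rate; intros Halpha HT1 [Hs [Hi Hsi]] Hrate.
  assert (Hu : (eps2 - eps1) * (1 - s - i) < alpha)
    by (apply unit_scale_lt; lra).
  assert (Hpos : 0 < (lambda - eps1) * s) by lra.
  clear Hrate Hu.
  destruct Hs as [Hs | <-]; [| lra].
  split; [exact Hs | nra].
Qed.

End RestPoints.

Theorem proposition3p1 (alpha beta lambda eps1 eps2 : R)
  (Halpha : 0 < alpha) (Hbeta : 0 < beta) (Hlambda : 0 < lambda)
  (Heps1 : 0 < eps1) (Heps2 : 0 < eps2)
  (HT0 : eps2 - beta < 0) (HT1 : eps2 - eps1 - alpha < 0) :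
  rest_point alpha beta lambda eps1 eps2 0 0 /\
  (forall s i : R, in_D1 s i ->
     rest_point alpha beta lambda eps1 eps2 s i -> s = 0 /\ i = 0).
Proof.
  split.
  { unfold rest_point; rewrite sdotE, idotE; split; ring. }
  intros s i HD [Hsdot Hidot]; rewrite sdotE in Hsdot; rewrite idotE in Hidot.
  assert (Hs0 : s = 0).
  { destruct (Rmult_integral _ _ Hsdot) as [Hs0 | Hsrate]; [exact Hs0 |].
    destruct (s_rate_eq0_in_D1 _ _ _ _ _ _ Hbeta HT0 HD Hsrate) as [Hi Hle].
    destruct (Rmult_integral _ _ Hidot) as [Hi0 | Hirate]; [lra |].
    destruct (i_rate_eq0_in_D1 _ _ _ _ _ _ Halpha HT1 HD Hirate); lra. }
  split; [exact Hs0 |].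
  destruct (Rmult_integral _ _ Hidot) as [Hi0 | Hirate]; [exact Hi0 |].
  destruct (i_rate_eq0_in_D1 _ _ _ _ _ _ Halpha HT1 HD Hirate); lra.
Qed.
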